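(* Let $\Omega\subseteq\mathbb{R}^n$ be open, let $f,g\in\mathbb{A}(\Omega)$ be D-continuous, and let $D$ be a dense subset of $\Omega$. Then: (a) if $f(x)\le g(x)$ for all $x\in D$, then $f(x)\le g(x)$ for all $x\in\Omega$; (b) if $f(x)=g(x)$ for all $x\in D$, then $f(x)=g(x)$ for all $x\in\Omega$; (c) if $f(x)\subseteq g(x)$ for all $x\in D$, then $f(x)\subseteq g(x)$ for all $x\in\Omega$.
   Context: $\overline{\mathbb{R}}=\mathbb{R}\cup\{\pm\infty\}$, $\mathbb{I}\overline{\mathbb{R}}$ is the set of closed intervals $[\underline a,\overline a]$ with $\underline a\le\overline a$ in $\overline{\mathbb{R}}$, $a\in\overline{\mathbb{R}}$ identified with $[a,a]$. $\mathbb{A}(X)$ is the set of functions $X\to\mathbb{I}\overline{\mathbb{R}}$. Order: $[\underline a,\overline a]\le[\underline b,\overline b]$ iff $\underline a\le\underline b$ and $\overline a\le\overline b$. $B_\delta(x)=\{y\in\Omega:\|x-y\|<\delta\}$. For dense $D\subseteq\Omega$ and $f\in\mathbb{A}(D)$: $I(D,\Omega,f)(x)=\sup_{\delta>0}\inf\{z\in f(y):y\in B_\delta(x)\cap D\}$, $S(D,\Omega,f)(x)=\inf_{\delta>0}\sup\{z\in f(y):y\in B_\delta(x)\cap D\}$, $F(D,\Omega,f)(x)=[I(D,\Omega,f)(x),S(D,\Omega,f)(x)]$. $f\in\mathbb{A}(\Omega)$ is D-continuous if $F(D,\Omega,f)=f$ for every dense subset $D$ of $\Omega$ (using the restriction of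 $f$ to $D$). *)

From HB Require Import structures.
From mathcomp Require Import all_boot all_order all_algebra.
From mathcomp Require Import all_classical all_reals.
From mathcomp Require Import ereal.
Set Implicit Arguments. Unset Strict Implicit. Unset Printing Implicit Defensive.
Import Order.TTheory GRing.Theory Num.Theory.
Local Open Scope classical_set_scope.
Local Open Scope ring_scope.

Definition enorm (R : realType) (n : nat) (x : 'rV[R]_n) : R :=
  Num.sqrt (\sum_(i < n) x ord0 i ^+ 2).

Definition Ball (R : realType) (n : nat) (Omega : set 'rV[R]_n)
  (x : 'rV[R]_n) (d : R) : set 'rV[R]_n :=
  [set y | Omega y /\ enorm (x - y) < d].

Definition is_open (R : realType) (n : nat) (Omega : set 'rV[R]_n) : Prop :=
  forall x, Omega x -> exists2 d : R, 0 < d &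
    forall y, enorm (x - y) < d -> Omega y.

Definition dense_in (R : realType) (n : nat) (D Omega : set 'rV[R]_n) : Prop :=
  D `<=` Omega /\
  forall x, Omega x -> forall d : R, 0 < d -> exists y, D y /\ enorm (x - y) < d.

Record itv (R : realType) := Itv {
  ilo : \bar R ;
  ihi : \bar R ;
  ilo_le_ihi : (ilo <= ihi)%E }.

Definition itv_set (R : realType) (a : itv R) : set (\bar R) :=
  [set z | (ilo a <= z)%E /\ (z <= ihi a)%E].

Definition itv_le (R : realType) (a b : itv R) : Prop :=
  (ilo a <= ilo b)%E /\ (ihi a <= ihi b)%E.

(* interval-valued functions are total functions R^n -> itv R; only their
   values on the relevant domain matter. *)

Definition Ilow (R : realType) (n : nat) (D Omega : set 'rV[R]_n)
  (f : 'rV[R]_n -> itv R) (x : 'rV[R]_n) : \bar R :=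
  ereal_sup [set ereal_inf [set z | exists2 y, (Ball Omega x d `&` D) y
                                             & itv_set (f y) z]
            | d in [set d : R | 0 < d]].

Definition Supp (R : realType) (n : nat) (D Omega : set 'rV[R]_n)
  (f : 'rV[R]_n -> itv R) (x : 'rV[R]_n) : \bar R :=
  ereal_inf [set ereal_sup [set z | exists2 y, (Ball Omega x d `&` D) y
                                             & itv_set (f y) z]
            | d in [set d : R | 0 < d]].

(* f is D-continuous on Omega: F(D,Omega,f) = f on Omega for every dense D,
   i.e. [I(D,Omega,f)(x), S(D,Omega,f)(x)] = f(x) for all x in Omega. *)
Definition D_continuous (R : realType) (n : nat) (Omega : set 'rV[R]_n)
  (f : 'rV[R]_n -> itv R) : Prop :=
  forall D : set 'rV[R]_n, dense_in D Omega ->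
    forall x, Omega x -> Ilow D Omega f x = ilo (f x) /\ Supp D Omega f x = ihi (f x).

From HB Require Import structures.
From mathcomp Require Import all_boot all_order all_algebra.
From mathcomp Require Import all_classical all_reals.
From mathcomp Require Import ereal.
Set Implicit Arguments. Unset Strict Implicit. Unset Printing Implicit Defensive.
Import Order.TTheory.
Local Open Scope classical_set_scope.
Local Open Scope ereal_scope.

(* The operators [I] and [S] only look at the values of [f] on [D], and are
   monotone in the lower, resp. upper, endpoints of those values.  A
   D-continuous function is recovered from its values on [D] through [I] and
   [S], so every comparison of endpoints on [D] extends to [Omega]; equality
   is two such comparisons, and inclusion of intervals compares the lower
   endpoints one way and the upper endpoints the other way. *)

Lemma itv_le_anti (R : realType) (a b : itv R) :
  itv_le a b -> itv_le b a -> a = b.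
Proof.
case: a => a1 a2 a12; case: b => b1 b2 b12.
move=> [/= le_a1b1 le_a2b2] [/= le_b1a1 le_b2a2].
have eq1 : a1 = b1 by apply/eqP; rewrite eq_le le_a1b1 le_b1a1.
have eq2 : a2 = b2 by apply/eqP; rewrite eq_le le_a2b2 le_b2a2.
by subst b1 b2; congr Itv; apply: eq_irrelevance.
Qed.

Lemma itv_le_refl (R : realType) (a : itv R) : itv_le a a.
Proof. by split; exact: lexx. Qed.

Lemma ilo_in_itv_set (R : realType) (a : itv R) : itv_set a (ilo a).
Proof. by split => //; exact: ilo_le_ihi. Qed.

Lemma ihi_in_itv_set (R : realType) (a : itv R) : itv_set a (ihi a).
Proof. by split => //; exact: ilo_le_ihi. Qed.

Lemma itv_set_subsetP (R : realType) (a b : itv R) :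
  itv_set a `<=` itv_set b <-> ilo b <= ilo a /\ ihi a <= ihi b.
Proof.
split=> [sub_ab | [le_lo le_hi] z [le_az le_za]].
  have [le_lo _] := sub_ab _ (ilo_in_itv_set a).
  by have [_ le_hi] := sub_ab _ (ihi_in_itv_set a).
by split; [exact: le_trans le_az | exact: le_trans le_hi].
Qed.

Section EndpointOperators.
Variables (R : realType) (n : nat) (Omega D : set 'rV[R]_n).
Variables (f g : 'rV[R]_n -> itv R).

Lemma le_Ilow x :
  (forall y, D y -> ilo (f y) <= ilo (g y)) ->
  Ilow D Omega f x <= Ilow D Omega g x.
Proof.
move=> le_fg; apply: ge_ereal_sup => _ [d d_gt0 <-].
apply: le_trans (ereal_sup_ubound _); last by exists d.
apply: le_ereal_inf_tmp => z [y [By Dy] [le_gz _]].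
apply: le_trans (le_trans (le_fg y Dy) le_gz).
by apply: ereal_inf_lbound; exists y => //; exact: ilo_in_itv_set.
Qed.

Lemma le_Supp x :
  (forall y, D y -> ihi (f y) <= ihi (g y)) ->
  Supp D Omega f x <= Supp D Omega g x.
Proof.
move=> le_fg; apply: le_ereal_inf_tmp => _ [d d_gt0 <-].
apply: le_trans (ereal_inf_lbound _) _; first by exists d.
apply: ge_ereal_sup => z [y [By Dy] [_ le_zf]].
apply: le_trans (le_trans le_zf (le_fg y Dy)) _.
by apply: ereal_sup_ubound; exists y => //; exact: ihi_in_itv_set.
Qed.

Hypotheses (cont_f : D_continuous Omega f) (cont_g : D_continuous Omega g).
Hypothesis dense_D : dense_in D Omega.

Lemma D_continuous_ilo_le :
  (forall y, D y -> ilo (f y) <= ilo (g y)) ->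
  forall x, Omega x -> ilo (f x) <= ilo (g x).
Proof.
move=> le_fg x Ox.
rewrite -(cont_f dense_D Ox).1 -(cont_g dense_D Ox).1; exact: le_Ilow.
Qed.

Lemma D_continuous_ihi_le :
  (forall y, D y -> ihi (f y) <= ihi (g y)) ->
  forall x, Omega x -> ihi (f x) <= ihi (g x).
Proof.
move=> le_fg x Ox.
rewrite -(cont_f dense_D Ox).2 -(cont_g dense_D Ox).2; exact: le_Supp.
Qed.

Lemma D_continuous_itv_le :
  (forall y, D y -> itv_le (f y) (g y)) ->
  forall x, Omega x -> itv_le (f x) (g x).
Proof.
move=> le_fg x Ox; split.
- by apply: D_continuous_ilo_le Ox => y /le_fg[].
- by apply: D_continuous_ihi_le Ox => y /le_fg[].
Qed.

End EndpointOperators.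

Theorem theorem14 (R : realType) (n : nat) (Omega D : set 'rV[R]_n)
  (f g : 'rV[R]_n -> itv R) :
  is_open Omega -> D_continuous Omega f -> D_continuous Omega g ->
  dense_in D Omega ->
  ((forall x, D x -> itv_le (f x) (g x)) ->
      forall x, Omega x -> itv_le (f x) (g x)) /\
  ((forall x, D x -> f x = g x) ->
      forall x, Omega x -> f x = g x) /\
  ((forall x, D x -> itv_set (f x) `<=` itv_set (g x)) ->
      forall x, Omega x -> itv_set (f x) `<=` itv_set (g x)).
Proof.
move=> _ cont_f cont_g dense_D.
split; first exact: D_continuous_itv_le.
split=> [eq_fg x Ox | sub_fg x Ox].
- have le_fg y : D y -> itv_le (f y) (g y).
    by move=> /eq_fg->; exact: itv_le_refl.
  have le_gf y : D y -> itv_le (g y) (f y).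
    by move=> /eq_fg->; exact: itv_le_refl.
  exact: itv_le_anti (D_continuous_itv_le cont_f cont_g dense_D le_fg Ox)
                     (D_continuous_itv_le cont_g cont_f dense_D le_gf Ox).
- apply/itv_set_subsetP; split.
  + apply: (D_continuous_ilo_le cont_g cont_f dense_D) Ox.
    by move=> y /sub_fg/itv_set_subsetP[].
  + apply: (D_continuous_ihi_le cont_f cont_g dense_D) Ox.
    by move=> y /sub_fg/itv_set_subsetP[].
Qed.
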